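(* For every integer $0\le k\le n$, the set $H_n^k$ is a single orbit of the action $(\pi,\sigma)\bullet A=\pi A\sigma^{-1}$ of $S_n\times S_n$; more explicitly, $$H_n^k=\{\pi\, U_{n,k}\,\sigma \mid \pi,\sigma\in S_n\}.$$
   Context: Permutations are composed as functions, and $\pi\in S_n$ is identified with the $n\times n$ permutation matrix whose $(i,j)$ entry is $1$ iff $i=\pi(j)$. For $A\in GL_n(\mathbb{Z}_2)$ let $\eta(A)$ be the partition obtained by sorting the row sums of $A$ (number of entries equal to $1$ in each row, computed as integers) in weakly decreasing order, and $\theta(A)$ the analogous partition for the column sums. For $0\le k\le n$ define $$H_n^k=\{A\in GL_n(\mathbb{Z}_2)\mid \eta(A)=(n,n-1,\dots,n-k+1,\underbrace{1,\dots,1}_{n-k}),\ \theta(A)=(\underbrace{k+1,\dots,k+1}_{n-k},k,k-1,\dots,2,1)\}.$$ $U_{n,k}$ is the $n\times n$ $(0,1)$-matrix whose upper left $k\times k$ block is upper triangular with all entries on and above the diagonal equal to $1$, whose upper right $k\times(n-k)$ block has all entries $1$, whose lower left $(n-k)\times k$ block is zero, and whose lower right $(n-k)\times(n-k)$ block is the identity $I_{n-k}$. *)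

From mathcomp Require Import all_boot all_order all_algebra all_fingroup.
Set Implicit Arguments. Unset Strict Implicit. Unset Printing Implicit Defensive.
Import GRing.Theory.
Local Open Scope ring_scope.

Definition pmat (n : nat) (pi : 'S_n) : 'M['F_2]_n :=
  \matrix_(i < n, j < n) (i == pi j)%:R.

Definition rowsum (n : nat) (A : 'M['F_2]_n) (i : 'I_n) : nat :=
  #|[pred j : 'I_n | A i j == 1]|.
Definition colsum (n : nat) (A : 'M['F_2]_n) (j : 'I_n) : nat :=
  #|[pred i : 'I_n | A i j == 1]|.

Definition eta (n : nat) (A : 'M['F_2]_n) : seq nat :=
  sort geq [seq rowsum A i | i <- enum 'I_n].
Definition theta (n : nat) (A : 'M['F_2]_n) : seq nat :=
  sort geq [seq colsum A j | j <- enum 'I_n].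

Definition eta_target (n k : nat) : seq nat :=
  [seq (n - i)%N | i <- iota 0 k] ++ nseq (n - k) 1%N.
Definition theta_target (n k : nat) : seq nat :=
  nseq (n - k) k.+1 ++ [seq (k - i)%N | i <- iota 0 k].

Definition Hnk (n k : nat) : pred 'M['F_2]_n :=
  fun A => [&& A \in unitmx, eta A == eta_target n k & theta A == theta_target n k].

Definition Unk (n k : nat) : 'M['F_2]_n :=
  \matrix_(i < n, j < n)
    (if (i < k)%N then (if (j < k)%N then (i <= j)%N%:R else 1)
     else (if (j < k)%N then 0 else (i == j)%:R)).
Arguments Hnk : clear implicits.
Arguments Unk : clear implicits.
Arguments eta_target : clear implicits.
Arguments theta_target : clear implicits.

From mathcomp Require Import all_boot all_order all_algebra all_fingroup.
From mathcomp Require Import zify.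
Set Implicit Arguments. Unset Strict Implicit. Unset Printing Implicit Defensive.
Import GRing.Theory.
Local Open Scope ring_scope.

(* Multiplying by permutation matrices permutes rows and columns, which
   preserves invertibility and the multisets of row and column sums, and
   U_{n,k} is invertible with the prescribed sums.  Conversely, reorder the
   rows and columns of A so that its sums agree with those of U_{n,k}
   position by position.  The n-k rows of weight one are unit vectors, and a
   column of weight k+1 must meet one of them because only k other rows
   remain; counting then shows that these unit vectors hit the n-k columns of
   weight k+1 bijectively, so a further column permutation puts their ones on
   the diagonal.  The sums now force every other entry: row i < k has no one
   left of the diagonal, since each column j < i is already filled by the rows
   up to j, and it has n-i ones, so it is full from the diagonal on. *)

Lemma card_ord_lt n b : (b <= n)%N -> #|[set i : 'I_n | (i < b)%N]| = b.
Proof.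
move=> le_bn; have widen_inj : injective (widen_ord le_bn).
  by move=> i j /(congr1 val) eq_ij; apply/val_inj.
rewrite -[RHS](card_ord b) -(card_imset (mem 'I_b) widen_inj).
apply: eq_card => i; rewrite inE; apply/idP/imsetP => [lt_ib | [j _ ->]].
  by exists (Ordinal lt_ib); last exact/val_inj.
by rewrite /= ltn_ord.
Qed.

Lemma card_ord_ge n b : (b <= n)%N -> #|[set i : 'I_n | (b <= i)%N]| = (n - b)%N.
Proof.
move=> le_bn; have := cardsC [set i : 'I_n | (i < b)%N].
have -> : ~: [set i : 'I_n | (i < b)%N] = [set i : 'I_n | (b <= i)%N].
  by apply/setP => i; rewrite !inE -leqNgt.
rewrite card_ord card_ord_lt //; lia.
Qed.

Lemma F2_eq1E (x : 'F_2) : x = (x == 1)%:R.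
Proof. by apply/val_inj; case: x => -[|[|m]]. Qed.

Lemma F2_nat_eq1 (b : bool) : ((b%:R : 'F_2) == 1) = b.
Proof. by case: b. Qed.

Definition rowsupp n (A : 'M['F_2]_n) (i : 'I_n) : {set 'I_n} := [set j | A i j == 1].
Definition colsupp n (A : 'M['F_2]_n) (j : 'I_n) : {set 'I_n} := [set i | A i j == 1].

Lemma rowsumE n (A : 'M['F_2]_n) i : rowsum A i = #|rowsupp A i|.
Proof. by rewrite cardsE. Qed.

Lemma colsumE n (A : 'M['F_2]_n) j : colsum A j = #|colsupp A j|.
Proof. by rewrite cardsE. Qed.

Lemma eq_F2mx_of_rowsupp n (A B : 'M['F_2]_n) : rowsupp A =1 rowsupp B -> A = B.
Proof.
move=> eq_supp; apply/matrixP => i j.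
rewrite (F2_eq1E (A i j)) (F2_eq1E (B i j)).
by have /setP/(_ j) := eq_supp i; rewrite !inE => ->.
Qed.

Lemma Unk_eq1 n k (i j : 'I_n) :
  (Unk n k i j == 1) = if (i < k)%N then (i <= j)%N else i == j.
Proof.
rewrite mxE; case: (ltnP i k) => [lt_ik | le_ki]; case: (ltnP j k) => [lt_jk | le_kj].
all: rewrite ?F2_nat_eq1 //.
  by rewrite (leq_trans (ltnW lt_ik) le_kj).
by apply/esym/negbTE; apply: contraTneq lt_jk => <-; rewrite -leqNgt.
Qed.

Lemma rowsupp_Unk n k (i : 'I_n) :
  rowsupp (Unk n k) i = if (i < k)%N then [set j : 'I_n | (i <= j)%N] else [set i].
Proof. by apply/setP => j; rewrite !inE Unk_eq1; case: ifP; rewrite ?inE // eq_sym. Qed.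

Lemma colsupp_Unk n k (j : 'I_n) :
  colsupp (Unk n k) j = if (j < k)%N then [set i : 'I_n | (i <= j)%N]
                        else j |: [set i : 'I_n | (i < k)%N].
Proof.
apply/setP => i; rewrite !inE Unk_eq1.
case: (ltnP j k) => [lt_jk | le_kj]; case: (ltnP i k) => [lt_ik | le_ki]; rewrite !inE //=.
- have lt_ji : (j < i)%N := leq_trans lt_jk le_ki.
  by rewrite leqNgt lt_ji; apply/negbTE/eqP => eq_ij; rewrite eq_ij ltnn in lt_ji.
- by rewrite lt_ik orbT (leq_trans (ltnW lt_ik) le_kj).
- by rewrite ltnNge le_ki orbF.
Qed.

Definition Unk_rowsum n k (i : nat) : nat := if (i < k)%N then (n - i)%N else 1%N.
Definition Unk_colsum k (j : nat) : nat := if (j < k)%N then j.+1 else k.+1.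

Lemma rowsum_Unk n k (i : 'I_n) : rowsum (Unk n k) i = Unk_rowsum n k i.
Proof.
rewrite rowsumE rowsupp_Unk /Unk_rowsum; case: ifP => _; last exact: cards1.
exact/card_ord_ge/ltnW.
Qed.

Lemma colsum_Unk n k (j : 'I_n) : (k <= n)%N -> colsum (Unk n k) j = Unk_colsum k j.
Proof.
move=> le_kn; rewrite colsumE colsupp_Unk /Unk_colsum; case: ltnP => [_ | le_kj].
  exact: (card_ord_lt (ltn_ord j)).
by rewrite cardsU1 card_ord_lt // inE ltnNge le_kj.
Qed.

Lemma eta_targetE n k : (k <= n)%N ->
  eta_target n k = [seq Unk_rowsum n k i | i <- iota 0 n].
Proof.
move=> le_kn; rewrite /eta_target; apply: (@eq_from_nth _ 0%N) => [|i].
  by rewrite size_cat !size_map !size_iota size_nseq subnKC.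
rewrite size_cat size_map size_iota size_nseq subnKC // => lt_in.
rewrite [RHS](nth_map 0%N) ?size_iota // nth_iota // nth_cat size_map size_iota.
rewrite /Unk_rowsum; case: ifP => lt_ik.
  by rewrite (nth_map 0%N) ?size_iota ?nth_iota.
by rewrite nth_nseq ifT //; lia.
Qed.

Lemma theta_targetE n k : (k <= n)%N ->
  theta_target n k = rev [seq Unk_colsum k i | i <- iota 0 n].
Proof.
move=> le_kn; rewrite /theta_target; apply: (@eq_from_nth _ 0%N) => [|i].
  by rewrite size_rev size_cat !size_map !size_iota size_nseq subnK.
rewrite size_cat size_map size_iota size_nseq subnK // => lt_in.
rewrite nth_rev ?size_map ?size_iota // (nth_map 0%N) ?size_iota; last lia.
rewrite nth_iota; last lia.
rewrite nth_cat size_nseq nth_nseq /Unk_colsum; case: ifP => lt_i_nk.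
  by rewrite lt_i_nk ifF //; lia.
rewrite (nth_map 0%N); last by rewrite size_iota; lia.
rewrite nth_iota; last lia.
by rewrite ifT; lia.
Qed.

Lemma geq_trans : transitive geq.
Proof. by move=> a b c /= le_ab le_bc; apply: leq_trans le_bc le_ab. Qed.

Lemma sort_geqP (s1 s2 : seq nat) :
  reflect (sort geq s1 = sort geq s2) (perm_eq s1 s2).
Proof.
apply: perm_sortP => [a b | | a b /andP[le_ba le_ab]]; last exact/anti_leq/andP.
  exact: leq_total.
exact: geq_trans.
Qed.

Lemma eta_Unk n k : (k <= n)%N -> eta (Unk n k) = eta_target n k.
Proof.
move=> le_kn; rewrite /eta (eq_map (@rowsum_Unk n k)) map_comp val_enum_ord.
rewrite eta_targetE // sorted_sort //; first exact: geq_trans.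
apply: homo_sorted (iota_sorted 0 n) => i j /= le_ij.
by rewrite /Unk_rowsum; case: ifP; case: ifP; lia.
Qed.

Lemma theta_Unk n k : (k <= n)%N -> theta (Unk n k) = theta_target n k.
Proof.
move=> le_kn; rewrite /theta (eq_map (@colsum_Unk n k ^~ le_kn)) map_comp val_enum_ord.
have sorted_colsums : sorted geq (rev [seq Unk_colsum k i | i <- iota 0 n]).
  rewrite rev_sorted; apply: homo_sorted (iota_sorted 0 n) => i j /= le_ij.
  by rewrite /Unk_colsum; case: ifP; case: ifP; lia.
rewrite theta_targetE // -(sorted_sort geq_trans sorted_colsums).
by apply/sort_geqP; rewrite perm_sym perm_rev.
Qed.

Lemma Unk_unit n k : Unk n k \in unitmx.
Proof.
have entryE i j : Unk n k i j = (if (i < k)%N then (i <= j)%N else i == j)%:R.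
  by rewrite [LHS]F2_eq1E Unk_eq1.
rewrite unitmxE -det_tr det_trig.
  by rewrite big1 ?unitr1 // => i _; rewrite mxE entryE leqnn eqxx if_same.
apply/is_trig_mxP => i j lt_ij; rewrite mxE entryE (leqNgt j) lt_ij.
rewrite (_ : (j == i) = false) ?if_same //.
by apply/negbTE/eqP => eq_ji; rewrite eq_ji ltnn in lt_ij.
Qed.

Lemma pmatE n (pi : 'S_n) : pmat pi = perm_mx pi^-1.
Proof. by apply/matrixP => i j; rewrite !mxE (can2_eq (permKV pi) (permK pi)). Qed.

Lemma pmat_mulmx n (pi sigma : 'S_n) (A : 'M['F_2]_n) :
  pmat pi *m A *m pmat sigma = col_perm sigma (row_perm pi^-1 A).
Proof. by rewrite !pmatE -row_permE col_permE. Qed.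

Lemma perm_eq_map_perm (T : finType) (s : {perm T}) : perm_eq (map s (enum T)) (enum T).
Proof.
apply: uniq_perm; [by rewrite (map_inj_uniq perm_inj) enum_uniq | exact: enum_uniq |].
by move=> x; rewrite mem_enum -[x](permKV s) map_f ?mem_enum.
Qed.

Lemma rowsupp_row_perm n (s : 'S_n) (A : 'M['F_2]_n) i :
  rowsupp (row_perm s A) i = rowsupp A (s i).
Proof. by apply/setP => j; rewrite !inE mxE. Qed.

Lemma rowsupp_col_perm n (s : 'S_n) (A : 'M['F_2]_n) i :
  rowsupp (col_perm s A) i = s @^-1: rowsupp A i.
Proof. by apply/setP => j; rewrite !inE mxE. Qed.

Lemma rowsum_row_perm n (s : 'S_n) (A : 'M['F_2]_n) i :
  rowsum (row_perm s A) i = rowsum A (s i).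
Proof. by rewrite !rowsumE rowsupp_row_perm. Qed.

Lemma rowsum_col_perm n (s : 'S_n) (A : 'M['F_2]_n) i :
  rowsum (col_perm s A) i = rowsum A i.
Proof. by rewrite !rowsumE rowsupp_col_perm card_preimset //; exact: perm_inj. Qed.

Lemma eta_row_perm n (s : 'S_n) (A : 'M['F_2]_n) : eta (row_perm s A) = eta A.
Proof.
apply/sort_geqP; rewrite (eq_map (rowsum_row_perm s A)) map_comp.
exact/perm_map/perm_eq_map_perm.
Qed.

Lemma eta_col_perm n (s : 'S_n) (A : 'M['F_2]_n) : eta (col_perm s A) = eta A.
Proof. by rewrite /eta (eq_map (rowsum_col_perm s A)). Qed.

Lemma colsum_tr n (A : 'M['F_2]_n) j : colsum A j = rowsum A^T j.
Proof. by apply: eq_card => i; rewrite !inE mxE. Qed.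

Lemma theta_tr n (A : 'M['F_2]_n) : theta A = eta A^T.
Proof. by rewrite /theta /eta (eq_map (colsum_tr A)). Qed.

Lemma eta_pmat_mulmx n (pi sigma : 'S_n) (A : 'M['F_2]_n) :
  eta (pmat pi *m A *m pmat sigma) = eta A.
Proof. by rewrite pmat_mulmx eta_col_perm eta_row_perm. Qed.

Lemma theta_pmat_mulmx n (pi sigma : 'S_n) (A : 'M['F_2]_n) :
  theta (pmat pi *m A *m pmat sigma) = theta A.
Proof.
by rewrite pmat_mulmx !theta_tr tr_col_perm tr_row_perm eta_row_perm eta_col_perm.
Qed.

Section UnkCharacterization.

Variables (n k : nat) (B : 'M['F_2]_n).
Hypothesis rowsumB : forall i, rowsum B i = rowsum (Unk n k) i.
Hypothesis colsumB : forall j : 'I_n, (j < k)%N -> colsum B j = colsum (Unk n k) j.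
Hypothesis diagB : forall i : 'I_n, (k <= i)%N -> B i i = 1.

Lemma rowsupp_lower (i : 'I_n) : (k <= i)%N -> rowsupp B i = [set i].
Proof.
move=> le_ki; apply/esym/eqP; rewrite eqEcard sub1set inE diagB // cards1.
by rewrite -rowsumE rowsumB rowsum_Unk /Unk_rowsum ltnNge le_ki.
Qed.

Lemma rowsupp_upper (i : 'I_n) : (i < k)%N -> rowsupp B i = [set j : 'I_n | (i <= j)%N].
Proof.
have [m] := ubnP i; elim: m i => // m IH i lt_im lt_ik.
have colsupp_left (j : 'I_n) : (j < i)%N -> colsupp B j = [set i' : 'I_n | (i' <= j)%N].
  move=> lt_ji; apply/eqP; rewrite eq_sym eqEcard; apply/andP; split.
    apply/subsetP => i'; rewrite inE => le_i'j.
    have : j \in rowsupp B i' by rewrite IH ?inE //; lia.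
    by rewrite !inE.
  rewrite -colsumE colsumB ?colsumE ?colsupp_Unk; last lia.
  by rewrite ifT //; lia.
apply/eqP; rewrite eqEcard; apply/andP; split.
  apply/subsetP => j; rewrite !inE; apply: contraTT; rewrite -ltnNge => lt_ji.
  by have /setP/(_ i) := colsupp_left j lt_ji; rewrite !inE leqNgt lt_ji => ->.
by rewrite -rowsumE rowsumB rowsum_Unk /Unk_rowsum lt_ik card_ord_ge // ltnW.
Qed.

Lemma eq_Unk_of_sums : B = Unk n k.
Proof.
apply: eq_F2mx_of_rowsupp => i; rewrite rowsupp_Unk.
by case: ltnP => [lt_ik | le_ki]; [exact: rowsupp_upper | exact: rowsupp_lower].
Qed.

End UnkCharacterization.

Lemma exists_perm_of_perm_eq (T : eqType) n (f g : 'I_n -> T) :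
  perm_eq [seq f i | i <- enum 'I_n] [seq g i | i <- enum 'I_n] ->
  exists s : 'S_n, forall i, f (s i) = g i.
Proof.
rewrite perm_sym => /(@tuple_permP _ _ _ [tuple f i | i < n])[s eq_gf].
exists s => i; have /eq_in_map eq_gfs : map g (enum 'I_n) = map (f \o s) (enum 'I_n).
  by rewrite eq_gf; apply: eq_map => j; rewrite tnth_mktuple.
by rewrite eq_gfs ?mem_enum.
Qed.

Section OrbitOfSums.

Variables (n k : nat) (A : 'M['F_2]_n) (P S0 : 'S_n).
Hypothesis le_kn : (k <= n)%N.
Hypothesis rowsumP : forall i, rowsum A (P i) = rowsum (Unk n k) i.
Hypothesis colsumS0 : forall j, colsum A (S0 j) = colsum (Unk n k) j.

Let tail := [set i : 'I_n | (k <= i)%N].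
Let unit_rows := P @: tail.
Let full_cols := S0 @: tail.
Let one_of (i : 'I_n) := odflt i [pick j in rowsupp A i].

Let card_unit_rows : #|unit_rows| = (n - k)%N.
Proof. by rewrite card_imset ?card_ord_ge //; exact: perm_inj. Qed.

Let card_full_cols : #|full_cols| = (n - k)%N.
Proof. by rewrite card_imset ?card_ord_ge //; exact: perm_inj. Qed.

Lemma rowsupp_unit_rows i : i \in unit_rows -> rowsupp A i = [set one_of i].
Proof.
case/imsetP => r; rewrite inE => le_kr ->.
have : #|rowsupp A (P r)| == 1%N.
  by rewrite -rowsumE rowsumP rowsum_Unk /Unk_rowsum ltnNge le_kr.
case/cards1P => j supp_j; rewrite /one_of supp_j.
by case: pickP => [j' /set1P -> // | /(_ j)]; rewrite set11.
Qed.

Lemma full_cols_sub : full_cols \subset one_of @: unit_rows.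
Proof.
apply/subsetP => _ /imsetP[c + ->]; rewrite inE => le_kc; apply: contraT => not_img.
have : colsupp A (S0 c) \subset ~: unit_rows.
  apply/subsetP => i; rewrite !inE => A_ic; apply: contra not_img => unit_rows_i.
  have /setP/(_ (S0 c)) := rowsupp_unit_rows unit_rows_i.
  rewrite !inE A_ic => /esym/eqP ->.
  exact: imset_f.
move/subset_leq_card; rewrite -colsumE colsumS0 colsum_Unk // /Unk_colsum ltnNge le_kc /=.
by rewrite cardsCs setCK card_ord card_unit_rows subKn // ltnn.
Qed.

Lemma one_of_unit_rows : one_of @: unit_rows = full_cols.
Proof.
apply/esym/eqP; rewrite eqEcard full_cols_sub card_full_cols -card_unit_rows.
exact: leq_imset_card.
Qed.

Lemma one_of_inj : {in unit_rows &, injective one_of}.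
Proof. by apply/imset_injP; rewrite one_of_unit_rows card_full_cols card_unit_rows. Qed.

Let sigma_fun (c : 'I_n) := if (c < k)%N then S0 c else one_of (P c).

Lemma sigma_fun_inj : injective sigma_fun.
Proof.
have unit_rows_P (c : 'I_n) : (k <= c)%N -> P c \in unit_rows.
  by move=> le_kc; rewrite imset_f ?inE.
have one_of_full_cols (c : 'I_n) : (k <= c)%N -> one_of (P c) \in full_cols.
  by move=> le_kc; rewrite -one_of_unit_rows imset_f ?unit_rows_P.
move=> c c'; rewrite /sigma_fun.
case: ltnP => [lt_ck | le_kc]; case: ltnP => [lt_c'k | le_kc'] eq_sigma.
- exact: perm_inj eq_sigma.
- move: (one_of_full_cols c' le_kc'); rewrite -eq_sigma mem_imset; last exact: perm_inj.
  by rewrite inE leqNgt lt_ck.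
- move: (one_of_full_cols c le_kc); rewrite eq_sigma mem_imset; last exact: perm_inj.
  by rewrite inE leqNgt lt_c'k.
- exact/(@perm_inj _ P)/(one_of_inj (unit_rows_P c le_kc) (unit_rows_P c' le_kc')).
Qed.

Let sigma := perm sigma_fun_inj.

Lemma permuted_eq_Unk : col_perm sigma (row_perm P A) = Unk n k.
Proof.
apply: eq_Unk_of_sums => [i | j lt_jk | i le_ki].
- by rewrite rowsum_col_perm rowsum_row_perm rowsumP.
- rewrite [LHS]colsum_tr tr_col_perm tr_row_perm rowsum_row_perm rowsum_col_perm.
  by rewrite -colsum_tr permE /sigma_fun lt_jk /= colsumS0.
- have : one_of (P i) \in rowsupp A (P i).
    by rewrite rowsupp_unit_rows ?set11 // imset_f // inE.
  by rewrite !mxE permE /sigma_fun ltnNge le_ki inE => /eqP.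
Qed.

Lemma Unk_orbit_of_sums : exists pi sigma : 'S_n, A = pmat pi *m Unk n k *m pmat sigma.
Proof.
exists P, sigma^-1%g; rewrite pmat_mulmx -permuted_eq_Unk.
by apply/matrixP => i j; rewrite !mxE !permKV.
Qed.

End OrbitOfSums.

Theorem mainTheorem1 (n k : nat) (hk : (k <= n)%N) (A : 'M['F_2]_n) :
  Hnk n k A <-> exists pi sigma : 'S_n, A = pmat pi *m Unk n k *m pmat sigma.
Proof.
split => [/and3P[_ /eqP etaA /eqP thetaA] | [pi [sigma ->]]].
  have [P rowsumP] : exists P : 'S_n, forall i, rowsum A (P i) = rowsum (Unk n k) i.
    apply/exists_perm_of_perm_eq/sort_geqP.
    by change (eta A = eta (Unk n k)); rewrite etaA eta_Unk.
  have [S colsumS] : exists S : 'S_n, forall j, colsum A (S j) = colsum (Unk n k) j.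
    apply/exists_perm_of_perm_eq/sort_geqP.
    by change (theta A = theta (Unk n k)); rewrite thetaA theta_Unk.
  exact: Unk_orbit_of_sums hk rowsumP colsumS.
apply/and3P; split.
- by rewrite !unitmx_mul !pmatE !unitmx_perm Unk_unit.
- by rewrite eta_pmat_mulmx eta_Unk.
- by rewrite theta_pmat_mulmx theta_Unk.
Qed.
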